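(* Let $d \ge 1$ be an integer and let $k > 0$. Suppose a random vector $\boldsymbol{w} = (w_1,\ldots,w_d) \in \mathbb{R}^d$ is drawn from a $d$-variate spherically symmetric distribution $\mathcal{D}$. Then for any fixed $\boldsymbol{x}, \boldsymbol{y} \in \mathbb{R}^d$, $$\left|\sum_{i=1}^d w_i x_i - \sum_{i=1}^d w_i y_i\right| \geq k \sum_{i=1}^d |x_i - y_i|$$ holds with probability at least $P_{\boldsymbol{\gamma} \sim \mathcal{D}}\left(|\gamma_1| \geq k\sqrt{d}\right)$, where $\gamma_1$ denotes the first coordinate of $\boldsymbol{\gamma}$.
   Context: A probability distribution $\mathcal{D}$ on $\mathbb{R}^d$ is spherically symmetric if for every $d \times d$ orthogonal matrix $Q$, whenever $\boldsymbol{w} \sim \mathcal{D}$, the vector $Q\boldsymbol{w}$ also has distribution $\mathcal{D}$. *)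

From HB Require Import structures.
From mathcomp Require Import all_boot all_order all_algebra.
From mathcomp Require Import all_classical all_reals all_analysis.
Set Implicit Arguments. Unset Strict Implicit. Unset Printing Implicit Defensive.
Import Order.TTheory GRing.Theory Num.Theory.
Local Open Scope ring_scope.
Local Open Scope classical_set_scope.

(* Vectors of R^d are represented as d.-tuples of reals; the measurable
   structure on d.-tuple R is the library's product (= Borel) sigma-algebra. *)

Definition orthogonal_mx (R : realType) (d : nat) (Q : 'M[R]_d) : Prop :=
  Q *m Q^T = 1%:M.

Definition mx_act (R : realType) (d : nat) (Q : 'M[R]_d) (w : d.-tuple R)
  : d.-tuple R := [tuple \sum_(j < d) Q i j * tnth w j | i < d].

Definition spherically_symmetric (R : realType) (d : nat)
  (D : probability (d.-tuple R) R) : Prop :=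
  forall Q : 'M[R]_d, orthogonal_mx Q ->
    forall A : set (d.-tuple R), measurable A ->
      D (mx_act Q @^-1` A) = D A.

From HB Require Import structures.
From mathcomp Require Import all_boot all_order all_algebra.
From mathcomp Require Import all_classical all_reals all_analysis.
From mathcomp Require Import measurable_realfun ring.
Set Implicit Arguments. Unset Strict Implicit. Unset Printing Implicit Defensive.
Import Order.TTheory GRing.Theory Num.Theory.
Local Open Scope ring_scope.
Local Open Scope classical_set_scope.

(* Put v = x - y.  The Householder reflection exchanging the i0-th basis
   vector and v / |v|_2 is orthogonal, so by spherical symmetry <v, w> / |v|_2
   has the same law as the coordinate w_i0.  Hence
   P(|<v, w>| >= k sqrt d |v|_2) = P(|w_i0| >= k sqrt d), and the
   Cauchy-Schwarz bound |v|_1 <= sqrt d |v|_2 gives the claim. *)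

Section MeasurableLinearForms.
Variable R : realType.

Lemma measurable_linear_form (n : nat) (c : 'I_n -> R) :
  measurable_fun setT (fun w : n.-tuple R => \sum_(i < n) c i * tnth w i).
Proof.
apply: measurable_sum => i; apply: measurableT_comp => //.
exact: measurable_tnth.
Qed.

Lemma measurable_norm_ge (a : R) : measurable [set r : R | a <= `|r|].
Proof.
rewrite -[X in measurable X]setTI.
have -> : [set r : R | a <= `|r|] = (@Num.norm R R) @^-1` `[a, +oo[.
  by apply/seteqP; split => r /=; rewrite in_itv /= andbT.
exact: normr_measurable (measurable_itv _).
Qed.

Lemma measurable_tnth_pred (n : nat) (i : 'I_n) (B : set R) :
  measurable B -> measurable [set w : n.-tuple R | B (tnth w i)].
Proof.
by move=> mB; rewrite -[X in measurable X]setTI; exact: measurable_tnth.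
Qed.

Lemma measurable_linear_form_norm_ge (n : nat) (c : 'I_n -> R) (a : R) :
  measurable [set w : n.-tuple R | a <= `|\sum_(i < n) c i * tnth w i|].
Proof.
rewrite -[X in measurable X]setTI.
exact: (@measurable_linear_form n c measurableT _ (measurable_norm_ge a)).
Qed.

End MeasurableLinearForms.

Lemma sqr_sum_le (R : realFieldType) (n : nat) (a : 'I_n -> R) :
  (\sum_(i < n) a i) ^+ 2 <= n%:R * \sum_(i < n) a i ^+ 2.
Proof.
case: n a => [|n] a; first by rewrite !big_ord0 mul0r expr0n.
set S := \sum_(i < _) a i; set N : R := n.+1%:R.
have : 0 <= \sum_(i < n.+1) (N * a i - S) ^+ 2.
  by apply: sumr_ge0 => i _; exact: sqr_ge0.
have -> : \sum_(i < n.+1) (N * a i - S) ^+ 2 =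
    N * (N * \sum_(i < n.+1) a i ^+ 2 - S ^+ 2).
  under eq_bigr do rewrite sqrrB exprMn.
  rewrite !big_split /= sumrN sumrMnl -mulr_suml -!mulr_sumr -/S.
  by rewrite sumr_const card_ord -mulr_natr -/N; ring.
by rewrite pmulr_rge0 ?ltr0Sn // subr_ge0.
Qed.

Section RowNorm.
Variables (R : rcfType) (n : nat).
Implicit Types u v : 'rV[R]_n.

Definition rv_norm v : R := Num.sqrt ((v *m v^T) 0 0).

Lemma rv_mulmx_trE v : (v *m v^T) 0 0 = \sum_(j < n) v 0 j ^+ 2.
Proof. by rewrite mxE; apply: eq_bigr => j _; rewrite mxE. Qed.

Lemma rv_mulmx_tr_ge0 v : 0 <= (v *m v^T) 0 0.
Proof. by rewrite rv_mulmx_trE; apply: sumr_ge0 => j _; exact: sqr_ge0. Qed.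

Lemma rv_mulmx_tr_eq0 v : (v *m v^T) 0 0 = 0 -> v = 0.
Proof.
rewrite rv_mulmx_trE => /psumr_eq0P v2; apply/rowP => j; rewrite mxE.
by apply/eqP; rewrite -sqrf_eq0; apply/eqP/v2 => // k _; exact: sqr_ge0.
Qed.

Lemma rv_norm_gt0 v : v != 0 -> 0 < rv_norm v.
Proof.
move=> v_neq0; rewrite sqrtr_gt0 lt_neqAle rv_mulmx_tr_ge0 andbT eq_sym.
by apply: contra v_neq0 => /eqP/rv_mulmx_tr_eq0 ->.
Qed.

Lemma rv_normalize_unit v :
  v != 0 -> ((rv_norm v)^-1 *: v) *m ((rv_norm v)^-1 *: v)^T = 1%:M.
Proof.
move=> /rv_norm_gt0 nv_gt0.
rewrite linearZ /= -scalemxAl -scalemxAr scalerA [v *m v^T]mx11_scalar.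
rewrite -(sqr_sqrtr (rv_mulmx_tr_ge0 v)) -/(rv_norm v) scale_scalar_mx.
by congr (_%:M); field; rewrite gt_eqF.
Qed.

Lemma rv_sum_abs_le v : \sum_(i < n) `|v 0 i| <= Num.sqrt n%:R * rv_norm v.
Proof.
rewrite /rv_norm rv_mulmx_trE -sqrtrM // -[leLHS]ger0_norm ?sumr_ge0 //.
rewrite -sqrtr_sqr; apply: ler_wsqrtr.
have -> : \sum_(j < n) v 0 j ^+ 2 = \sum_(j < n) `|v 0 j| ^+ 2.
  by apply: eq_bigr => j _; rewrite real_normK ?num_real.
exact: sqr_sum_le.
Qed.

End RowNorm.

Section Householder.
Variables (R : fieldType) (n : nat).

(* For u = 0 the junk value 2 / 0 = 0 makes this the identity. *)
Definition householder_mx (u : 'rV[R]_n) : 'M[R]_n :=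
  1%:M - (2 / (u *m u^T) 0 0) *: (u^T *m u).

Lemma householder_mx_tr (u : 'rV[R]_n) : (householder_mx u)^T = householder_mx u.
Proof.
by rewrite /householder_mx [LHS]linearB /= trmx1 [(_ *: _)^T]linearZ /= trmx_mul trmxK.
Qed.

Lemma householder_mx_orthogonal (u : 'rV[R]_n) :
  householder_mx u *m (householder_mx u)^T = 1%:M.
Proof.
rewrite householder_mx_tr /householder_mx.
set c := 2 / _; set s := (u *m u^T) 0 0; set P := u^T *m u.
have sqP : P *m P = s *: P.
  by rewrite mulmxA -(mulmxA u^T) [u *m _]mx11_scalar mul_mx_scalar -scalemxAl.
have ccs : c * c * s = c + c.
  have [s0|s0] := eqVneq s 0; first by rewrite /c -/s s0 invr0 !mulr0 addr0.
  by rewrite /c -/s; field.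
rewrite mulmxBl mul1mx mulmxBr mulmx1 -scalemxAl -scalemxAr sqP !scalerA ccs.
by rewrite scalerDl opprB addrK subrK.
Qed.

End Householder.

Lemma householder_mx_row (R : rcfType) (n : nat) (i0 : 'I_n) (q : 'rV[R]_n) :
  q *m q^T = 1%:M -> row i0 (householder_mx (delta_mx 0 i0 - q)) = q.
Proof.
move=> qq1; set e := delta_mx 0 i0; set u := e - q.
have eT (v : 'rV_n) : e *m v^T = (v 0 i0)%:M.
  by rewrite -rowE; apply/matrixP => i j; rewrite !ord1 !mxE eqxx.
have uuT : (u *m u^T) 0 0 = u 0 i0 *+ 2.
  rewrite /u linearB /= mulmxBl !mulmxBr !eT qq1.
  rewrite -[q *m e^T]trmxK trmx_mul trmxK eT tr_scalar_mx !mxE !eqxx /=.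
  by ring.
rewrite rowE /householder_mx mulmxBr mulmx1 -scalemxAr mulmxA eT mul_scalar_mx.
rewrite scalerA; suff -> : (2 / (u *m u^T) 0 0 * u 0 i0) *: u = u.
  by rewrite opprB addrC subrK.
have [u0|u0] := eqVneq (u 0 i0) 0.
  by rewrite (rv_mulmx_tr_eq0 (v := u)) ?scaler0 // uuT u0 mul0rn.
by rewrite uuT -mulr_natr [X in X *: _](_ : _ = 1) ?scale1r //; field.
Qed.

Section SphericalSymmetry.
Variables (R : realType) (n : nat) (D : probability (n.-tuple R) R).
Hypothesis hD : spherically_symmetric D.

Lemma spherically_symmetric_direction (i0 : 'I_n) (q : 'rV[R]_n) (B : set R) :
  q *m q^T = 1%:M -> measurable B ->
  D [set w | B (tnth w i0)] = D [set w | B (\sum_(j < n) q 0 j * tnth w j)].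
Proof.
move=> qq1 mB; set Q := householder_mx (delta_mx 0 i0 - q).
have QE j : Q i0 j = q 0 j.
  by have /rowP/(_ j) := householder_mx_row i0 qq1; rewrite mxE.
have oQ : orthogonal_mx Q := householder_mx_orthogonal _.
rewrite -(hD oQ (measurable_tnth_pred i0 mB)).
congr (D _); apply/funext => w; rewrite /preimage /= tnth_mktuple.
by congr B; apply: eq_bigr => j _; rewrite -QE.
Qed.

Lemma spherically_symmetric_dot_ge (i0 : 'I_n) (a : R) (v : 'rV[R]_n) : v != 0 ->
  D [set w | a <= `|tnth w i0|]
  = D [set w | a * rv_norm v <= `|\sum_(j < n) v 0 j * tnth w j|].
Proof.
move=> v_neq0; have nv_gt0 := rv_norm_gt0 v_neq0.
rewrite (spherically_symmetric_direction i0 (rv_normalize_unit v_neq0)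
  (measurable_norm_ge a)).
congr (D _); apply/funext => w /=; rewrite -ler_pdivlMr //.
under eq_bigr do rewrite mxE -mulrA.
by rewrite -mulr_sumr normrM gtr0_norm ?invr_gt0 // mulrC.
Qed.

End SphericalSymmetry.

Theorem theorem1 (R : realType) (d : nat) (hd : (1 <= d)%N) (k : R) (hk : 0 < k)
  (D : probability (d.-tuple R) R) (hD : spherically_symmetric D)
  (x y : d.-tuple R) :
  (D [set g : d.-tuple R | (k * Num.sqrt (d%:R) <= `| nth 0 (val g) 0 |)%R ]
   <= D [set w : d.-tuple R |
          (k * (\sum_(i < d) `| tnth x i - tnth y i |)
          <= `| \sum_(i < d) tnth w i * tnth x i - \sum_(i < d) tnth w i * tnth y i |)%R ])%E.
Proof.
pose i0 : 'I_d := Ordinal hd.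
pose v : 'rV[R]_d := \row_i (tnth x i - tnth y i).
have l1E : \sum_(i < d) `|tnth x i - tnth y i| = \sum_(i < d) `|v 0 i|.
  by apply: eq_bigr => i _; rewrite mxE.
have dotE (w : d.-tuple R) : \sum_(i < d) tnth w i * tnth x i
    - \sum_(i < d) tnth w i * tnth y i = \sum_(i < d) v 0 i * tnth w i.
  by rewrite -sumrB; apply: eq_bigr => i _; rewrite mxE -mulrBr mulrC.
under eq_set => g do rewrite -(tnth_nth 0 g i0).
under [X in (_ <= D X)%E]eq_set => w do rewrite l1E dotE.
have [v0|v_neq0] := eqVneq v 0.
  apply: le_measure; rewrite ?inE.
  - exact: measurable_tnth_pred (measurable_norm_ge _).
  - exact: measurable_linear_form_norm_ge.
  - by move=> w _ /=; rewrite v0 big1 ?mulr0 // => i _; rewrite mxE normr0.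
rewrite (spherically_symmetric_dot_ge hD i0 _ v_neq0).
apply: le_measure; rewrite ?inE.
- exact: measurable_linear_form_norm_ge.
- exact: measurable_linear_form_norm_ge.
- move=> w /=; apply: le_trans; rewrite -mulrA ler_pM2l //.
  exact: rv_sum_abs_le.
Qed.
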